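(* Let $\mathbb K$ be a field with $2\in\mathbb K^\times$, $A$ a unital commutative associative $\mathbb K$-algebra, $\mathfrak k$ a $\mathbb K$-Lie algebra and $\mathfrak g=A\otimes\mathfrak k$. Then $$P(Z_2(\mathfrak g))=(\Lambda^2(A)\otimes S^2(\mathfrak k))\oplus(A\otimes Z_2(\mathfrak k))\oplus(I_A\otimes\Lambda^2(\mathfrak k)).$$
   Context: $\mathfrak g$ has bracket $[a\otimes x,a'\otimes x']=aa'\otimes[x,x']$, $ax=a\otimes x$, unit $\mathbf 1$. $v\wedge w=\tfrac12(v\otimes w-w\otimes v)$, $v\vee w=\tfrac12(v\otimes w+w\otimes v)$. For a Lie algebra $\mathfrak h$, $Z_2(\mathfrak h)$ is the kernel of $\Lambda^2(\mathfrak h)\to\mathfrak h$, $u\wedge v\mapsto[u,v]$. $I_A$ is the kernel of multiplication $S^2(A)\to A$. $P=(p_1,p_2,p_3)$ is the linear isomorphism $\Lambda^2(\mathfrak g)\to(\Lambda^2(A)\otimes S^2(\mathfrak k))\oplus(A\otimes\Lambda^2(\mathfrak k))\oplus(I_A\otimes\Lambda^2(\mathfrak k))$ with $p_1(ax\wedge by)=a\wedge b\otimes x\vee y$, $p_2(ax\wedge by)=ab\otimes x\wedge y$, $p_3(ax\wedge by)=(a\vee b-ab\vee\mathbf 1)\otimes x\wedge y$. *)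

From HB Require Import structures.
From mathcomp Require Import all_boot all_order all_algebra.
From mathcomp Require Import boolp functions.
Set Implicit Arguments. Unset Strict Implicit. Unset Printing Implicit Defensive.
Import GRing.Theory.
Local Open Scope ring_scope.

Section Tensor.
Variable K : fieldType.

Record bil (V W : lmodType K) := Bil {
  bil_fun :> V -> W -> K;
  bil_linl : forall (a : K) v v' w, bil_fun (a *: v + v') w = a * bil_fun v w + bil_fun v' w;
  bil_linr : forall (a : K) v w w', bil_fun v (a *: w + w') = a * bil_fun v w + bil_fun v w' }.

Variables V W : lmodType K.

Lemma bil0l (b : bil V W) w : b 0 w = 0.
Proof.
have := bil_linl b 1 0 0 w; rewrite scale1r addr0 mul1r => H.
by apply: (@addrI _ (b 0 w)); rewrite addr0 -H.
Qed.

Lemma bilZl (b : bil V W) (a : K) v w : b (a *: v) w = a * b v w.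
Proof. by rewrite -[a *: v]addr0 bil_linl bil0l addr0. Qed.

(* the functional on bilinear forms given by a formal sum  sum_i v_i (x) w_i *)
Definition ev (s : seq (V * W)) : bil V W -> K^o :=
  fun b => \sum_(p <- s) b p.1 p.2.

Definition is_tens (f : bil V W -> K^o) : bool := `[< exists s, f = ev s >].

Lemma is_tens_closed : submod_closed is_tens.
Proof.
split.
  apply/asboolP; exists [::]; apply/funext => b; rewrite /ev big_nil //.
move=> a u v /asboolP [s ->] /asboolP [t ->]; apply/asboolP.
exists ([seq (a *: p.1, p.2) | p <- s] ++ t); apply/funext => b.
rewrite /ev big_cat big_map /=.
have -> : \sum_(i <- s) b (a *: i.1) i.2 = a * \sum_(p <- s) b p.1 p.2.
  by rewrite mulr_sumr; apply: eq_bigr => p _; rewrite bilZl.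
by [].
Qed.

HB.instance Definition _ := GRing.isSubmodClosed.Build K (bil V W -> K^o) is_tens
  is_tens_closed.

(* The tensor product V (x)_K W, realised as the span of the pure tensors
   inside the dual of the space of bilinear forms on V x W. *)
Record tensor := Tensor { tval : bil V W -> K^o; tvalP : is_tens tval }.
HB.instance Definition _ := [isSub for tval].
HB.instance Definition _ := [Choice of tensor by <:].
HB.instance Definition _ := [SubChoice_isSubLmodule of tensor by <:].

Definition tens (v : V) (w : W) : tensor.
Proof. apply: (@Tensor (ev [:: (v, w)])); apply/asboolP; by exists [:: (v, w)]. Defined.

(* a chosen representation t = sum_i v_i (x) w_i, used to define maps by
   linear extension of their values on pure tensors *)
Definition trepr (t : tensor) : seq (V * W) :=
  projT1 (cid (elimT (asboolP _) (tvalP t))).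

End Tensor.

Arguments tens {K V W}.
Arguments trepr {K V W}.

Section Constructions.
Variable K : fieldType.

Definition wedge (V : lmodType K) (v w : V) : tensor V V :=
  2^-1 *: (tens v w - tens w v).
Definition vee (V : lmodType K) (v w : V) : tensor V V :=
  2^-1 *: (tens v w + tens w v).

Definition in_span (U : lmodType K) (X : U -> Prop) (u : U) : Prop :=
  exists s : seq (K * U), (forall p, p \in s -> X p.2) /\
    u = \sum_(p <- s) p.1 *: p.2.

Definition Lam2 (V : lmodType K) : tensor V V -> Prop :=
  in_span (fun t => exists v w, t = wedge v w).
Definition Sym2 (V : lmodType K) : tensor V V -> Prop :=
  in_span (fun t => exists v w, t = vee v w).

Definition tsub (U U' : lmodType K) (X : U -> Prop) (Y : U' -> Prop)
  : tensor U U' -> Prop :=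
  in_span (fun t => exists x y, X x /\ Y y /\ t = tens x y).

Definition is_lie (L : lmodType K) (br : L -> L -> L) : Prop :=
  [/\ forall (a : K) x x' y, br (a *: x + x') y = a *: br x y + br x' y,
      forall (a : K) x y y', br x (a *: y + y') = a *: br x y + br x y',
      forall x, br x x = 0 &
      forall x y z, br x (br y z) + br y (br z x) + br z (br x y) = 0].

(* the linear map h (x) h -> h, u (x) v |-> [u, v]; on Lambda^2(h) it is
   u /\ v |-> [u, v] *)
Definition brmap (L : lmodType K) (br : L -> L -> L) (t : tensor L L) : L :=
  \sum_(p <- trepr t) br p.1 p.2.

Definition Z2 (L : lmodType K) (br : L -> L -> L) (t : tensor L L) : Prop :=
  Lam2 t /\ brmap br t = 0.

Definition multmap (A : comAlgType K) (t : tensor A A) : A :=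
  \sum_(p <- trepr t) p.1 * p.2.
Definition IA (A : comAlgType K) (t : tensor A A) : Prop :=
  Sym2 t /\ multmap t = 0.

Variables (A : comAlgType K) (k : lmodType K) (brk : k -> k -> k).

Definition gl := tensor A k.
Definition brg (u v : gl) : gl :=
  \sum_(p <- trepr u) \sum_(q <- trepr v) tens (p.1 * q.1) (brk p.2 q.2).

(* the components of P, defined on g (x) g by extending (a x) (x) (b y) |-> ...
   linearly; restricted to Lambda^2(g) they are the maps p_1, p_2, p_3
   (ax /\ by |-> ...). *)
Definition p1 (t : tensor gl gl) : tensor (tensor A A) (tensor k k) :=
  \sum_(uv <- trepr t) \sum_(ax <- trepr uv.1) \sum_(bY <- trepr uv.2)
     tens (wedge ax.1 bY.1) (vee ax.2 bY.2).
Definition p2 (t : tensor gl gl) : tensor A (tensor k k) :=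
  \sum_(uv <- trepr t) \sum_(ax <- trepr uv.1) \sum_(bY <- trepr uv.2)
     tens (ax.1 * bY.1) (wedge ax.2 bY.2).
Definition p3 (t : tensor gl gl) : tensor (tensor A A) (tensor k k) :=
  \sum_(uv <- trepr t) \sum_(ax <- trepr uv.1) \sum_(bY <- trepr uv.2)
     tens (vee ax.1 bY.1 - vee (ax.1 * bY.1) 1) (wedge ax.2 bY.2).

End Constructions.

(* Each component of P, like the bracket of g = A ⊗ k, is induced by a
   quadrilinear map on g ⊗ g: ax ⊗ by is sent to (a∧b) ⊗ (x∨y), ab ⊗ (x∧y),
   (a∨b - ab∨1) ⊗ (x∧y) and ab ⊗ [x,y] respectively. So p1 and p3 land in the
   first and third summands, p2 lands in A ⊗ Λ²(k), and the bracket of g equals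
   (id ⊗ [,]) ∘ p2; since tensoring with A over a field preserves kernels, p2
   maps Z2(g) into A ⊗ Z2(k).
   Conversely R = wedge_shuffle : (a⊗b) ⊗ (x⊗y) ↦ ax ∧ by lands in Λ²(g) and
   satisfies p1 ∘ R = alt ⊗ sym, p2 ∘ R = mult ⊗ alt,
   p3 ∘ R = (sym - mult(·)∨1) ⊗ alt and [,] ∘ R = mult ⊗ [,]. Hence R is a section of P over the first and third
   summands, and a ⊗ z ↦ R((a∨1) ⊗ z) is one over the second.
   The modules may be infinite dimensional: the linear functionals needed to
   extend bilinear maps to tensor products and to prove exactness come from
   Zorn's lemma. *)

From Pilot Require Import Defs.
From HB Require Import structures.
From mathcomp Require Import all_boot all_order all_algebra.
From mathcomp Require Import boolp functions classical_sets.
Import GRing.Theory.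
Local Open Scope ring_scope.
Set Implicit Arguments. Unset Strict Implicit. Unset Printing Implicit Defensive.

Section LinearAlgebra.
Variable K : fieldType.

Definition subspace (V : lmodType K) (S : V -> Prop) :=
  S 0 /\ forall a x y, S x -> S y -> S (a *: x + y).

Section LinearFacts.
Variables (V U : lmodType K) (f : V -> U).
Hypothesis f_lin : linear f.

Lemma linB x y : f (x - y) = f x - f y.
Proof. exact: (zmod_morphism_linear f_lin x y). Qed.

Lemma lin0 : f 0 = 0.
Proof. by rewrite -(subrr 0) linB subrr. Qed.

Lemma linN x : f (- x) = - f x.
Proof. by rewrite -sub0r linB lin0 sub0r. Qed.

Lemma linD x y : f (x + y) = f x + f y.
Proof. by have := f_lin 1 x y; rewrite !scale1r. Qed.

Lemma linZ a x : f (a *: x) = a *: f x.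
Proof. by rewrite -[a *: x]addr0 f_lin lin0 addr0. Qed.

Lemma lin_sum I (r : seq I) (F : I -> V) :
  f (\sum_(i <- r) F i) = \sum_(i <- r) f (F i).
Proof. exact: (big_morph f linD lin0). Qed.

End LinearFacts.

Section LinearClosure.
Variables (V U : lmodType K).
Implicit Types f g : V -> U.

Lemma linear_add f g : linear f -> linear g -> linear (fun x => f x + g x).
Proof. by move=> fL gL a x y; rewrite fL gL scalerDr addrACA. Qed.

Lemma linear_sub f g : linear f -> linear g -> linear (fun x => f x - g x).
Proof. by move=> fL gL a x y; rewrite fL gL scalerBr opprD addrACA. Qed.

Lemma linear_scale c f : linear f -> linear (fun x => c *: f x).
Proof. by move=> fL a x y; rewrite fL scalerDr !scalerA mulrC. Qed.

Lemma linear_comp (W : lmodType K) (h : U -> W) f :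
  linear h -> linear f -> linear (fun x => h (f x)).
Proof. by move=> hL fL a x y; rewrite fL hL. Qed.

Lemma linear_id : linear (fun x : V => x).
Proof. by []. Qed.

Lemma linear_cst0 : linear (fun _ : V => 0 : U).
Proof. by move=> a x y; rewrite scaler0 addr0. Qed.

End LinearClosure.

Section SubspaceFacts.
Variable V : lmodType K.
Implicit Types (S X : V -> Prop) (x y : V).

Lemma subspaceD S x y : subspace S -> S x -> S y -> S (x + y).
Proof. by case=> _ Sc Sx Sy; rewrite -[x]scale1r; apply: Sc. Qed.

Lemma subspaceZ S a x : subspace S -> S x -> S (a *: x).
Proof. by case=> S0 Sc Sx; rewrite -[_ *: x]addr0; apply: Sc. Qed.

Lemma subspaceB S x y : subspace S -> S x -> S y -> S (x - y).
Proof.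
by move=> sS Sx Sy; rewrite -scaleN1r; apply: subspaceD => //; apply: subspaceZ.
Qed.

Lemma subspace_sum S I (r : seq I) (P : pred I) (F : I -> V) :
  subspace S -> (forall i, P i -> S (F i)) -> S (\sum_(i <- r | P i) F i).
Proof. by move=> sS; apply: big_ind; [case: sS | move=> x y; apply: subspaceD]. Qed.

Lemma span0 X : in_span X 0.
Proof. by exists [::]; rewrite big_nil. Qed.

Lemma subspace_span X : subspace (in_span X).
Proof.
split; first exact: span0.
move=> a _ _ [s [Xs ->]] [t [Xt ->]].
exists ([seq (a * p.1, p.2) | p <- s] ++ t); split.
  by move=> p; rewrite mem_cat => /orP [/mapP [q /Xs Xq ->] | /Xt].
rewrite big_cat big_map scaler_sumr; congr (_ + _).
by apply: eq_bigr => p _; rewrite scalerA.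
Qed.

Lemma span_mem X x : X x -> in_span X x.
Proof.
move=> Xx; exists [:: (1, x)]; rewrite big_seq1 scale1r; split=> // p.
by rewrite inE => /eqP ->.
Qed.

Lemma span_ind X S : subspace S -> (forall x, X x -> S x) ->
  forall u, in_span X u -> S u.
Proof.
move=> sS XS _ [s [Xs ->]]; rewrite big_seq; apply: subspace_sum => // p ps.
by apply: subspaceZ => //; apply/XS/Xs.
Qed.

Section LinearSubspace.
Variable U : lmodType K.
Implicit Types f g : V -> U.

Lemma subspace_preimage (T : U -> Prop) f :
  linear f -> subspace T -> subspace (fun x => T (f x)).
Proof.
move=> fL [T0 Tc]; split=> [|a x y Tx Ty]; first by rewrite lin0.
by rewrite fL; apply: Tc.
Qed.

Lemma subspace_eq f g : linear f -> linear g -> subspace (fun x => f x = g x).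
Proof.
move=> fL gL; split=> [|a x y ex ey]; first by rewrite !lin0.
by rewrite fL gL ex ey.
Qed.

Lemma eq_in_span X f g : linear f -> linear g -> (forall x, X x -> f x = g x) ->
  forall u, in_span X u -> f u = g u.
Proof. by move=> fL gL; apply: span_ind; apply: subspace_eq. Qed.

End LinearSubspace.
End SubspaceFacts.

Section Separation.
Local Open Scope classical_set_scope.
Variables (V : lmodType K) (S : V -> Prop) (v : V).
Hypotheses (S_sub : subspace S) (v_notin : ~ S v).

Definition avoiding (M : set V) := [/\ subspace M, S `<=` M & ~ M v].

Lemma maximal_avoiding : exists2 M, avoiding M &
  forall N, avoiding N -> M `<=` N -> N `<=` M.
Proof.
(* The empty set is allowed because it is the union of the empty chain. *)
pose P W := W = set0 \/ avoiding W.
have [M [[->|avM] Mmax]] : exists M, P M /\ forall N, M `<` N -> ~ P N.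
- apply: Zorn_bigcup => F FP Ftot.
  have avoidF X x : F X -> X x -> avoiding X.
    by move=> FXX Xx; case: (FP X FXX) => // X0; rewrite X0 in Xx.
  have [[X0 FX0 /set0P [x0 /(avoidF X0 x0 FX0) [[X00 _] SX0 _]]] | Fempty] :=
    pselect (exists2 X, F X & X != set0); last first.
    left; apply/seteqP; split=> // x [X FX Xx].
    by apply: Fempty; exists X => //; apply/set0P; exists x.
  right; split; last by move=> [X FX Xv]; have [] := avoidF X v FX Xv.
  + split; first by exists X0.
    move=> a x y [X FX Xx] [Y FY Yy].
    have [[sX _ _] [sY _ _]] := (avoidF X x FX Xx, avoidF Y y FY Yy).
    have [XY|YX] := Ftot X Y FX FY.
      by exists Y => //; case: sY => _; apply => //; apply: XY.
    by exists X => //; case: sX => _; apply => //; apply: YX.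
  + by move=> x Sx; exists X0 => //; apply: SX0.
- exfalso; apply: (Mmax S); last by right; split.
  by split=> // /(_ 0); case: S_sub => S0 _ /(_ S0).
exists M => // N avN MN; apply: contrapT => NM.
by apply: (Mmax N); [split | right].
Qed.

Lemma maximal_avoiding_codim1 M : avoiding M ->
  (forall N, avoiding N -> M `<=` N -> N `<=` M) ->
  forall x, exists c, M (x - c *: v).
Proof.
move=> [sM SM Mv] Mmax x; apply: contrapT => nx.
pose N y := exists w c, M w /\ y = w + c *: x.
have sN : subspace N.
  split; first by exists 0, 0; rewrite scale0r addr0; split => //; case: sM.
  move=> a _ _ [w1 [c1 [M1 ->]]] [w2 [c2 [M2 ->]]].
  exists (a *: w1 + w2), (a * c1 + c2); split; first by case: sM => _; apply.
  by rewrite scalerDl -scalerA scalerDr addrACA.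
have MN : M `<=` N by move=> y My; exists y, 0; rewrite scale0r addr0.
have Nv : ~ N v.
  move=> [w [c [Mw vE]]]; have [c0|c_neq0] := eqVneq c 0.
    by apply: Mv; rewrite vE c0 scale0r addr0.
  apply: nx; exists c^-1; rewrite vE scalerDr scalerA mulVf // scale1r.
  by rewrite opprD addrA addrAC subrr add0r -scaleNr; apply: subspaceZ.
apply: nx; exists 0; rewrite scale0r subr0.
apply: (Mmax N) => //; first by split => // y /SM /MN.
by exists 0, 1; rewrite scale1r add0r; split => //; case: sM.
Qed.

Lemma separating_functional :
  exists phi : V -> K^o, [/\ linear phi, forall x, S x -> phi x = 0 & phi v = 1].
Proof.
have [M avM Mmax] := maximal_avoiding.
have coef := maximal_avoiding_codim1 avM Mmax.
case: avM => sM SM Mv.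
have coef_uniq x c c' : M (x - c *: v) -> M (x - c' *: v) -> c = c'.
  move=> Mc Mc'; have [//|cc'] := eqVneq c c'; exfalso; apply: Mv.
  have -> : v = (c' - c)^-1 *: ((x - c *: v) - (x - c' *: v)).
    rewrite opprD opprK addrACA subrr add0r addrC -scalerBl scalerA.
    by rewrite mulVf ?scale1r // subr_eq0 eq_sym.
  by apply: subspaceZ => //; apply: subspaceB.
pose phi x : K^o := projT1 (cid (coef x)).
have phiP x : M (x - phi x *: v) := projT2 (cid (coef x)).
exists phi; split.
- move=> a x y; apply: (coef_uniq (a *: x + y)) => //.
  have -> : a *: x + y - (a * phi x + phi y) *: v =
      a *: (x - phi x *: v) + (y - phi y *: v).
    by rewrite scalerDl scalerBr scalerA opprD addrACA.
  by case: sM => _; apply.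
- by move=> x Sx; apply: (coef_uniq x) => //; rewrite scale0r subr0; apply: SM.
- by apply: (coef_uniq v) => //; rewrite scale1r subrr; case: sM.
Qed.

End Separation.

Definition bilinear_map (V W U : lmodType K) (beta : V -> W -> U) :=
  (forall w, linear (beta^~ w)) /\ (forall v, linear (beta v)).

End LinearAlgebra.

Section TensorLift.
Variables (K : fieldType) (V W : lmodType K).

Lemma tval_tens_sum (s : seq (V * W)) :
  Defs.tval (\sum_(p <- s) tens p.1 p.2) = ev s.
Proof.
apply/funext => b; elim: s => [|[v w] s IH]; first by rewrite big_nil /ev big_nil.
rewrite big_cons /=; transitivity (ev [:: (v, w)] b + ev s b); first by rewrite -IH.
by rewrite /ev big_seq1 big_cons.
Qed.

Lemma tens_trepr (t : tensor V W) : t = \sum_(p <- trepr t) tens p.1 p.2.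
Proof. by apply: val_inj; rewrite /= tval_tens_sum /trepr; case: cid. Qed.

Lemma tensor_ind (S : tensor V W -> Prop) : subspace S ->
  (forall v w, S (tens v w)) -> forall t, S t.
Proof. by move=> sS Stens t; rewrite (tens_trepr t); apply: subspace_sum. Qed.

Lemma tens_linearl w : linear (tens^~ w : V -> tensor V W).
Proof.
move=> a x y; apply: val_inj; apply/funext => b.
change (ev [:: (a *: x + y, w)] b = a * ev [:: (x, w)] b + ev [:: (y, w)] b).
by rewrite /ev !big_seq1 bil_linl.
Qed.

Lemma tens_linearr v : linear (tens v : W -> tensor V W).
Proof.
move=> a x y; apply: val_inj; apply/funext => b.
change (ev [:: (v, a *: x + y)] b = a * ev [:: (v, x)] b + ev [:: (v, y)] b).
by rewrite /ev !big_seq1 bil_linr.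
Qed.

Lemma tens0l w : tens 0 w = 0 :> tensor V W.
Proof. exact: lin0 (tens_linearl w). Qed.

Lemma tens0r v : tens v 0 = 0 :> tensor V W.
Proof. exact: lin0 (tens_linearr v). Qed.

Variable U : lmodType K.

Definition tlift (beta : V -> W -> U) (t : tensor V W) : U :=
  \sum_(p <- trepr t) beta p.1 p.2.

(* Well-definedness: a nonzero difference of two evaluations would be seen by a
   linear functional phi on U, and phi \o beta is a bilinear form on V x W. *)
Lemma tlift_sum beta (s : seq (V * W)) : bilinear_map beta ->
  tlift beta (\sum_(p <- s) tens p.1 p.2) = \sum_(p <- s) beta p.1 p.2.
Proof.
move=> [betaL betaR]; apply/eqP; rewrite -subr_eq0; apply/eqP; apply: contrapT => ne.
have sub0 : subspace (fun x : U => x = 0).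
  by split=> // a x y -> ->; rewrite scaler0 addr0.
have [phi [phiL _ phi1]] := separating_functional sub0 ne.
have bL a v v' w : phi (beta (a *: v + v') w) = a * phi (beta v w) + phi (beta v' w).
  by rewrite betaL phiL.
have bR a v w w' : phi (beta v (a *: w + w')) = a * phi (beta v w) + phi (beta v w').
  by rewrite betaR phiL.
have := congr1 (fun t => Defs.tval t (Bil bL bR)) (tens_trepr (\sum_(p <- s) tens p.1 p.2)).
rewrite /= !tval_tens_sum /ev /= -!(lin_sum phiL) => e.
by move: phi1; rewrite linB // -e subrr => /eqP; rewrite eq_sym oner_eq0.
Qed.

Lemma tlift_tens beta v w : bilinear_map beta -> tlift beta (tens v w) = beta v w.
Proof. by move=> betaB; have := tlift_sum [:: (v, w)] betaB; rewrite !big_seq1. Qed.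

Lemma tlift_linear beta : bilinear_map beta -> linear (tlift beta).
Proof.
move=> betaB a x y.
have -> : a *: x + y = \sum_(p <- [seq (a *: q.1, q.2) | q <- trepr x] ++ trepr y)
    tens p.1 p.2.
  rewrite big_cat big_map {1}(tens_trepr x) {1}(tens_trepr y) scaler_sumr.
  by congr (_ + _); apply: eq_bigr => p _; rewrite (linZ (tens_linearl _)).
rewrite tlift_sum // big_cat big_map scaler_sumr; congr (_ + _).
by apply: eq_bigr => p _; case: betaB => betaL _; rewrite (linZ (betaL _)).
Qed.

Lemma tlift_linear_param (P : lmodType K) (beta : P -> V -> W -> U) t :
  (forall v w, linear (fun p => beta p v w)) -> linear (fun p => tlift (beta p) t).
Proof.
move=> betaL a x y; rewrite /tlift scaler_sumr -big_split.
by apply: eq_bigr => p _; rewrite betaL.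
Qed.

Lemma eq_tensor (f g : tensor V W -> U) : linear f -> linear g ->
  (forall v w, f (tens v w) = g (tens v w)) -> forall t, f t = g t.
Proof. by move=> fL gL; apply: tensor_ind; apply: subspace_eq. Qed.

End TensorLift.

Section TensorMap.
Variables (K : fieldType) (V W V' W' : lmodType K) (f : V -> V') (g : W -> W').

Definition tmap : tensor V W -> tensor V' W' := tlift (fun v w => tens (f v) (g w)).

Hypotheses (f_lin : linear f) (g_lin : linear g).

Lemma bilinear_tens_map : bilinear_map (fun v w => tens (f v) (g w)).
Proof.
split=> [w|v]; first exact: linear_comp (tens_linearl _) f_lin.
exact: linear_comp (tens_linearr _) g_lin.
Qed.

Lemma tmap_tens v w : tmap (tens v w) = tens (f v) (g w).
Proof. exact: tlift_tens bilinear_tens_map. Qed.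

Lemma tmap_linear : linear tmap.
Proof. exact: tlift_linear bilinear_tens_map. Qed.

Lemma tmap_tsub (X : V -> Prop) (Y : W -> Prop) (h : tensor V W -> tensor V' W') :
  linear h -> (forall x y, X x -> Y y -> tens (f x) (g y) = h (tens x y)) ->
  forall u, tsub X Y u -> tmap u = h u.
Proof.
move=> hL fgh; apply: eq_in_span tmap_linear hL _ => _ [x [y [Xx [Yy ->]]]].
by rewrite tmap_tens fgh.
Qed.

Lemma tmap_tsub0 (X : V -> Prop) (Y : W -> Prop) :
  (forall x y, X x -> Y y -> tens (f x) (g y) = 0) ->
  forall u, tsub X Y u -> tmap u = 0.
Proof. by move=> fg0; apply: (tmap_tsub (h := fun _ => 0)) => //; apply: linear_cst0. Qed.

End TensorMap.

Lemma tmap_tsub_id (K : fieldType) (V W : lmodType K) (f : V -> V) (g : W -> W)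
    (X : V -> Prop) (Y : W -> Prop) : linear f -> linear g ->
  (forall x y, X x -> Y y -> tens (f x) (g y) = tens x y) ->
  forall u, tsub X Y u -> tmap f g u = u.
Proof. by move=> fL gL; apply: (tmap_tsub fL gL (h := id)). Qed.

Lemma tmap_comp (K : fieldType) (V W V' W' V'' W'' : lmodType K)
    (f : V -> V') (g : W -> W') (f' : V' -> V'') (g' : W' -> W'') :
  linear f -> linear g -> linear f' -> linear g' ->
  forall u, tmap f' g' (tmap f g u) = tmap (fun v => f' (f v)) (fun w => g' (g w)) u.
Proof.
move=> fL gL f'L g'L; apply: eq_tensor.
- exact: linear_comp (tmap_linear f'L g'L) (tmap_linear fL gL).
- exact: tmap_linear (linear_comp f'L fL) (linear_comp g'L gL).
by move=> v w; rewrite !tmap_tens //; apply: linear_comp.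
Qed.

Section DoubleTensor.
Variables (K : fieldType) (V1 W1 V2 W2 U : lmodType K).

Lemma tensor_tensor_ind (S : tensor (tensor V1 W1) (tensor V2 W2) -> Prop) :
  subspace S -> (forall a x b y, S (tens (tens a x) (tens b y))) -> forall t, S t.
Proof.
move=> sS Stt; apply: tensor_ind => // s t; move: s.
apply: tensor_ind => [|a x]; first exact: subspace_preimage (tens_linearl _) sS.
by move: t; apply: tensor_ind => [|b y]; first exact: subspace_preimage (tens_linearr _) sS.
Qed.

Lemma eq_tensor_tensor (f g : tensor (tensor V1 W1) (tensor V2 W2) -> U) :
  linear f -> linear g ->
  (forall a x b y, f (tens (tens a x) (tens b y)) = g (tens (tens a x) (tens b y))) ->
  forall t, f t = g t.
Proof. by move=> fL gL; apply: tensor_tensor_ind; apply: subspace_eq. Qed.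

Definition quadrilinear (F : V1 -> W1 -> V2 -> W2 -> U) :=
  [/\ forall x b y, linear (fun a => F a x b y), forall a b y, linear (fun x => F a x b y),
      forall a x y, linear (fun b => F a x b y) & forall a x b, linear (fun y => F a x b y)].

Definition qlift (F : V1 -> W1 -> V2 -> W2 -> U) : tensor (tensor V1 W1) (tensor V2 W2) -> U :=
  tlift (fun s t => tlift (fun a x => tlift (fun b y => F a x b y) t) s).

Variable F : V1 -> W1 -> V2 -> W2 -> U.
Hypothesis F_quad : quadrilinear F.

Lemma bilinear_qlift_inner a x : bilinear_map (fun b y => F a x b y).
Proof. by case: F_quad. Qed.

Lemma bilinear_qlift_mid t : bilinear_map (fun a x => tlift (fun b y => F a x b y) t).
Proof. by case: F_quad => Fa Fx _ _; split=> [x|a]; apply: tlift_linear_param. Qed.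

Lemma bilinear_qlift_outer :
  bilinear_map (fun s t => tlift (fun a x => tlift (fun b y => F a x b y) t) s).
Proof.
split=> [t|s]; first exact: tlift_linear (bilinear_qlift_mid t).
by apply: tlift_linear_param => a x; apply: tlift_linear (bilinear_qlift_inner a x).
Qed.

Lemma qlift_linear : linear (qlift F).
Proof. exact: tlift_linear bilinear_qlift_outer. Qed.

Lemma qlift_tens a x b y : qlift F (tens (tens a x) (tens b y)) = F a x b y.
Proof.
rewrite /qlift (tlift_tens _ _ bilinear_qlift_outer) (tlift_tens _ _ (bilinear_qlift_mid _)).
exact: tlift_tens (bilinear_qlift_inner a x).
Qed.

Lemma qlift_in (S : U -> Prop) : subspace S -> (forall a x b y, S (F a x b y)) ->
  forall t, S (qlift F t).
Proof.
move=> sS SF; apply: tensor_tensor_ind => [|a x b y]; last by rewrite qlift_tens.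
exact: subspace_preimage qlift_linear sS.
Qed.

End DoubleTensor.

Lemma quadrilinear_tens (K : fieldType) (V1 W1 V2 W2 V W : lmodType K)
    (f : V1 -> V2 -> V) (g : W1 -> W2 -> W) :
  bilinear_map f -> bilinear_map g -> quadrilinear (fun a x b y => tens (f a b) (g x y)).
Proof.
move=> [f1 f2] [g1 g2]; split=> *.
- exact: linear_comp (tens_linearl _) (f1 _).
- exact: linear_comp (tens_linearr _) (g1 _).
- exact: linear_comp (tens_linearl _) (f2 _).
- exact: linear_comp (tens_linearr _) (g2 _).
Qed.

Section WedgeVee.
Variables (K : fieldType) (V U : lmodType K).
Implicit Types (x y : V) (beta : V -> V -> U).

Lemma bilinear_wedge : bilinear_map (@wedge K V).
Proof.
split=> [w|v]; apply: linear_scale; apply: linear_sub;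
  by [apply: tens_linearl | apply: tens_linearr].
Qed.

Lemma bilinear_vee : bilinear_map (@vee K V).
Proof.
split=> [w|v]; apply: linear_scale; apply: linear_add;
  by [apply: tens_linearl | apply: tens_linearr].
Qed.

Lemma wedgeC x y : wedge y x = - wedge x y.
Proof. by rewrite /wedge -scalerN opprB. Qed.

Lemma veeC x y : vee y x = vee x y.
Proof. by rewrite /vee addrC. Qed.

Lemma Lam2_wedge x y : Lam2 (wedge x y).
Proof. by apply: span_mem; exists x, y. Qed.

Lemma Sym2_vee x y : Sym2 (vee x y).
Proof. by apply: span_mem; exists x, y. Qed.

Lemma tlift_wedge beta x y : bilinear_map beta ->
  tlift beta (wedge x y) = 2^-1 *: (beta x y - beta y x).
Proof.
move=> betaB; have betaL := tlift_linear betaB.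
by rewrite /wedge (linZ betaL) (linB betaL) !tlift_tens.
Qed.

Lemma tlift_vee beta x y : bilinear_map beta ->
  tlift beta (vee x y) = 2^-1 *: (beta x y + beta y x).
Proof.
move=> betaB; have betaL := tlift_linear betaB.
by rewrite /vee (linZ betaL) (linD betaL) !tlift_tens.
Qed.

Lemma tlift_Lam2_sym beta s : bilinear_map beta -> (forall x y, beta y x = beta x y) ->
  Lam2 s -> tlift beta s = 0.
Proof.
move=> betaB betaC; move: s.
apply: (eq_in_span (g := fun _ => 0)) (tlift_linear betaB) (@linear_cst0 _ _ _) _.
by move=> _ [x [y ->]]; rewrite tlift_wedge // (betaC x y) subrr scaler0.
Qed.

Lemma tlift_Sym2_antisym beta s : bilinear_map beta ->
  (forall x y, beta y x = - beta x y) -> Sym2 s -> tlift beta s = 0.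
Proof.
move=> betaB betaC; move: s.
apply: (eq_in_span (g := fun _ => 0)) (tlift_linear betaB) (@linear_cst0 _ _ _) _.
by move=> _ [x [y ->]]; rewrite tlift_vee // (betaC x y) subrr scaler0.
Qed.

Hypothesis two_unit : (2 : K) != 0.

Lemma half_double (u : U) : 2^-1 *: (u + u) = u.
Proof. by rewrite -mulr2n -scaler_nat scalerA mulVf // scale1r. Qed.

Lemma tlift_wedge_antisym beta x y : bilinear_map beta ->
  (forall x y, beta y x = - beta x y) -> tlift beta (wedge x y) = beta x y.
Proof. by move=> betaB betaC; rewrite tlift_wedge // (betaC x y) opprK half_double. Qed.

Lemma tlift_vee_sym beta x y : bilinear_map beta ->
  (forall x y, beta y x = beta x y) -> tlift beta (vee x y) = beta x y.
Proof. by move=> betaB betaC; rewrite tlift_vee // (betaC x y) half_double. Qed.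

End WedgeVee.

Definition alt (K : fieldType) (V : lmodType K) := tlift (@wedge K V).
Definition sym (K : fieldType) (V : lmodType K) := tlift (@vee K V).

Section AltSym.
Variables (K : fieldType) (V : lmodType K).
Hypothesis two_unit : (2 : K) != 0.

Lemma alt_linear : linear (@alt K V).
Proof. exact: tlift_linear (bilinear_wedge _). Qed.

Lemma sym_linear : linear (@sym K V).
Proof. exact: tlift_linear (bilinear_vee _). Qed.

Lemma alt_tens x y : alt (tens x y) = wedge x y :> tensor V V.
Proof. exact: tlift_tens (bilinear_wedge _). Qed.

Lemma sym_tens x y : sym (tens x y) = vee x y :> tensor V V.
Proof. exact: tlift_tens (bilinear_vee _). Qed.

Lemma alt_Lam2 s : Lam2 s -> alt s = s :> tensor V V.
Proof.
move: s; apply: (eq_in_span (g := id)) alt_linear (fun _ _ _ => erefl) _ => _ [x [y ->]].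
by rewrite /alt tlift_wedge_antisym //; [apply: bilinear_wedge | apply: wedgeC].
Qed.

Lemma sym_Sym2 s : Sym2 s -> sym s = s :> tensor V V.
Proof.
move: s; apply: (eq_in_span (g := id)) sym_linear (fun _ _ _ => erefl) _ => _ [x [y ->]].
by rewrite /sym tlift_vee_sym //; [apply: bilinear_vee | apply: veeC].
Qed.

Lemma alt_Sym2 s : Sym2 s -> alt s = 0 :> tensor V V.
Proof. exact: tlift_Sym2_antisym (bilinear_wedge _) (@wedgeC _ _). Qed.

Lemma sym_Lam2 s : Lam2 s -> sym s = 0 :> tensor V V.
Proof. exact: tlift_Lam2_sym (bilinear_vee _) (@veeC _ _). Qed.

End AltSym.

Section Flatness.
Variables (K : fieldType) (A : lmodType K).

Lemma tens_sum_absorb (W : lmodType K) n (a : nat -> A) (c : nat -> K) (h : nat -> W) :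
  a n = \sum_(i < n) c i *: a i ->
  \sum_(i < n.+1) tens (a i) (h i) = \sum_(i < n) tens (a i) (h i + c i *: h n).
Proof.
move=> an; rewrite big_ord_recr /= an (lin_sum (tens_linearl (h n))) -big_split /=.
apply: eq_bigr => i _.
by rewrite (linZ (tens_linearl _)) -(linZ (tens_linearr _)) (linD (tens_linearr _)).
Qed.

Lemma tens_sum_coef (W : lmodType K) n (a : nat -> A) (h : nat -> W) :
  ~ (exists c : nat -> K, a n = \sum_(i < n) c i *: a i) ->
  \sum_(i < n.+1) tens (a i) (h i) = 0 -> h n = 0.
Proof.
move=> a_free sum0.
pose S x := exists c : nat -> K, x = \sum_(i < n) c i *: a i.
have sS : subspace S.
  split; first by exists (fun _ => 0); rewrite big1 // => i _; rewrite scale0r.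
  move=> b _ _ [cx ->] [cy ->]; exists (fun i => b * cx i + cy i).
  by rewrite scaler_sumr -big_split; apply: eq_bigr => i _; rewrite scalerDl scalerA.
have [phi [phiL phi0 phi1]] := separating_functional sS a_free.
have Sa (i : 'I_n) : S (a i).
  exists (fun j : nat => (j == i)%:R); rewrite (bigD1 i) //= eqxx scale1r big1 ?addr0 //.
  by move=> j /negbTE ji; rewrite [_ == _ :> nat]ji scale0r.
have evB : bilinear_map (fun (x : A) (y : W) => phi x *: y).
  split=> [y c x x'|x]; first by rewrite phiL scalerDl scalerA.
  exact: linear_scale.
have := congr1 (tlift (fun x y => phi x *: y)) sum0.
rewrite (lin0 (tlift_linear evB)) (lin_sum (tlift_linear evB)) big_ord_recr /=.
rewrite tlift_tens // phi1 scale1r big1 ?add0r // => i _.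
by rewrite tlift_tens // (phi0 _ (Sa i)) scale0r.
Qed.

Variables (M N : lmodType K) (f : M -> N) (L : M -> Prop).
Hypotheses (f_lin : linear f) (L_sub : subspace L).

Lemma tsub_family u : tsub (fun _ : A => True) L u ->
  exists n (a : nat -> A) (l : nat -> M),
    (forall i, L (l i)) /\ u = \sum_(i < n) tens (a i) (l i).
Proof.
move: u; apply: span_ind => [|_ [x [y [_ [Ly ->]]]]]; last first.
  by exists 1%N, (fun _ => x), (fun _ => y); rewrite big_ord1.
split.
  by exists 0%N, (fun _ => 0), (fun _ => 0); rewrite big_ord0; case: L_sub.
move=> c _ _ [n1 [a1 [l1 [L1 ->]]]] [n2 [a2 [l2 [L2 ->]]]].
exists (n1 + n2)%N, (fun i => if (i < n1)%N then a1 i else a2 (i - n1)%N),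
  (fun i => if (i < n1)%N then c *: l1 i else l2 (i - n1)%N); split.
  by move=> i; case: ifP => _ //; apply: subspaceZ.
rewrite big_split_ord /= scaler_sumr; congr (_ + _).
  by apply: eq_bigr => i _; rewrite ltn_ord (linZ (tens_linearr _)).
by apply: eq_bigr => i _; rewrite ltnNge leq_addr /= addKn.
Qed.

(* Induction on the length of the sum: either the last left factor depends
   linearly on the others and can be absorbed, or it is independent and then
   its right factor lies in the kernel. *)
Lemma tens_sum_ker n (a : nat -> A) (l : nat -> M) : (forall i, L (l i)) ->
  \sum_(i < n) tens (a i) (f (l i)) = 0 ->
  tsub (fun _ : A => True) (fun m => L m /\ f m = 0) (\sum_(i < n) tens (a i) (l i)).
Proof.
elim: n a l => [|n IH] a l Ll sum0; first by rewrite big_ord0; apply: span0.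
have [[c an]|a_free] := pselect (exists c : nat -> K, a n = \sum_(i < n) c i *: a i).
  rewrite (tens_sum_absorb _ an); apply: (IH a (fun i => l i + c i *: l n)).
    by move=> i; apply: subspaceD => //; apply: subspaceZ.
  rewrite -[RHS]sum0 (tens_sum_absorb (fun i => f (l i)) an); apply: eq_bigr => i _.
  by rewrite (linD f_lin) (linZ f_lin).
have fln : f (l n) = 0 := tens_sum_coef (h := fun i => f (l i)) a_free sum0.
rewrite big_ord_recr /=; apply: subspaceD; first exact: subspace_span.
  by apply: IH => //; move: sum0; rewrite big_ord_recr /= fln tens0r addr0.
by apply: span_mem; exists (a n), (l n).
Qed.

Lemma tsub_ker u : tsub (fun _ : A => True) L u -> tmap id f u = 0 ->
  tsub (fun _ : A => True) (fun m => L m /\ f m = 0) u.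
Proof.
move=> /tsub_family [n [a [l [Ll ->]]]].
rewrite (lin_sum (tmap_linear (@linear_id _ A) f_lin)) => sum0.
apply: tens_sum_ker => //; rewrite -[RHS]sum0; apply: eq_bigr => i _.
by rewrite tmap_tens.
Qed.

End Flatness.

Lemma qlift_wedge (K : fieldType) (V W U : lmodType K) (F : V -> W -> V -> W -> U) a x b y :
  (2 : K) != 0 -> quadrilinear F -> (forall a x b y, F b y a x = - F a x b y) ->
  qlift F (wedge (tens a x) (tens b y)) = F a x b y.
Proof.
move=> two_unit Fq Fanti; have FL := qlift_linear Fq.
by rewrite /wedge (linZ FL) (linB FL) !qlift_tens // (Fanti a x) opprK half_double.
Qed.

Section CurrentAlgebra.
Variables (K : fieldType) (A : comAlgType K) (k : lmodType K) (brk : k -> k -> k).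
Hypotheses (two_unit : (2 : K) != 0) (lie_k : is_lie brk).
Implicit Type w : tensor (gl A k) (gl A k).

Lemma bilinear_mul : bilinear_map (fun a b : A => a * b).
Proof. by split=> [b|a] c x y; rewrite ?mulrDl ?mulrDr -?scalerAl -?scalerAr. Qed.

Lemma bilinear_bracket : bilinear_map brk.
Proof. by case: lie_k => brkL brkR _ _; split=> [y|x] a u v; [apply: brkL | apply: brkR]. Qed.

Lemma bracketC x y : brk y x = - brk x y.
Proof.
have [brkL brkR] := bilinear_bracket; case: lie_k => _ _ brk_xx _.
have := brk_xx (x + y); rewrite (linD (brkL _)) !(linD (brkR _)) !brk_xx add0r addr0.
by move/eqP; rewrite addrC addr_eq0 => /eqP.
Qed.

Lemma multmapE : @multmap K A =1 tlift (fun a b => a * b).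
Proof. by []. Qed.

Lemma brmapE : brmap brk =1 tlift brk.
Proof. by []. Qed.

Lemma multmap_linear : linear (@multmap K A).
Proof. by move=> c s t; rewrite !multmapE (tlift_linear bilinear_mul). Qed.

Lemma brmap_linear : linear (brmap brk).
Proof. by move=> c s t; rewrite !brmapE (tlift_linear bilinear_bracket). Qed.

Lemma multmap_tens a b : multmap (tens a b) = a * b :> A.
Proof. by rewrite multmapE tlift_tens //; apply: bilinear_mul. Qed.

Lemma brmap_tens x y : brmap brk (tens x y) = brk x y.
Proof. by rewrite brmapE tlift_tens //; apply: bilinear_bracket. Qed.

Lemma multmap_vee a b : multmap (vee a b) = a * b :> A.
Proof.
by rewrite multmapE tlift_vee_sym //; [apply: bilinear_mul | move=> ? ?; apply: mulrC].
Qed.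

Lemma multmap_Lam2 s : Lam2 s -> multmap s = 0 :> A.
Proof.
by rewrite multmapE; apply: tlift_Lam2_sym; [apply: bilinear_mul | move=> ? ?; apply: mulrC].
Qed.

Lemma brmap_wedge x y : brmap brk (wedge x y) = brk x y.
Proof.
by rewrite brmapE tlift_wedge_antisym //; [apply: bilinear_bracket | apply: bracketC].
Qed.

Lemma quadrilinear_p1 : quadrilinear (fun (a : A) (x : k) b y => tens (wedge a b) (vee x y)).
Proof. exact: quadrilinear_tens (bilinear_wedge _) (bilinear_vee _). Qed.

Lemma quadrilinear_p2 : quadrilinear (fun (a : A) (x : k) b y => tens (a * b) (wedge x y)).
Proof. exact: quadrilinear_tens bilinear_mul (bilinear_wedge _). Qed.

Lemma quadrilinear_p3 :
  quadrilinear (fun (a : A) (x : k) b y => tens (vee a b - vee (a * b) 1) (wedge x y)).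
Proof.
apply: quadrilinear_tens (bilinear_wedge _).
have [m1 m2] := bilinear_mul; have [v1 v2] := bilinear_vee A.
split=> [b|a]; apply: linear_sub.
- exact: v1.
- exact: linear_comp (v1 1) (m1 b).
- exact: v2.
- exact: linear_comp (v1 1) (m2 a).
Qed.

Lemma quadrilinear_bracket :
  quadrilinear (fun (a : A) (x : k) b y => tens (a * b) (brk x y)).
Proof. exact: quadrilinear_tens bilinear_mul bilinear_bracket. Qed.

Lemma p1E : @p1 K A k =1 qlift (fun a x b y => tens (wedge a b) (vee x y)).
Proof. by []. Qed.

Lemma p2E : @p2 K A k =1 qlift (fun a x b y => tens (a * b) (wedge x y)).
Proof. by []. Qed.

Lemma p3E : @p3 K A k =1 qlift (fun a x b y => tens (vee a b - vee (a * b) 1) (wedge x y)).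
Proof. by []. Qed.

Lemma bracketE : brmap (brg (A := A) brk) =1 qlift (fun a x b y => tens (a * b) (brk x y)).
Proof. by []. Qed.

Definition wedge_shuffle : tensor (tensor A A) (tensor k k) -> tensor (gl A k) (gl A k) :=
  qlift (fun (a b : A) (x y : k) => wedge (tens a x) (tens b y)).

Lemma quadrilinear_wedge_shuffle :
  quadrilinear (fun (a b : A) (x y : k) => wedge (tens a x) (tens b y) : tensor (gl A k) _).
Proof.
have [wl wr] := bilinear_wedge (gl A k).
split=> *; by [ apply: linear_comp (wl _) (tens_linearl _)
              | apply: linear_comp (wr _) (tens_linearl _)
              | apply: linear_comp (wl _) (tens_linearr _)
              | apply: linear_comp (wr _) (tens_linearr _) ].
Qed.

Lemma wedge_shuffle_linear : linear wedge_shuffle.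
Proof. exact: qlift_linear quadrilinear_wedge_shuffle. Qed.

Lemma Lam2_wedge_shuffle u : Lam2 (wedge_shuffle u).
Proof.
apply: qlift_in quadrilinear_wedge_shuffle _ (subspace_span _) _ _ => a b x y.
exact: Lam2_wedge.
Qed.

Lemma qlift_wedge_shuffle (U : lmodType K) (F : A -> k -> A -> k -> U)
    (phi : tensor (tensor A A) (tensor k k) -> U) :
  quadrilinear F -> (forall a x b y, F b y a x = - F a x b y) -> linear phi ->
  (forall a b x y, phi (tens (tens a b) (tens x y)) = F a x b y) ->
  forall u, qlift F (wedge_shuffle u) = phi u.
Proof.
move=> Fq Fanti phiL phiF; apply: eq_tensor_tensor => //.
  exact: linear_comp (qlift_linear Fq) wedge_shuffle_linear.
move=> a b x y; rewrite /wedge_shuffle qlift_tens; last exact: quadrilinear_wedge_shuffle.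
by rewrite qlift_wedge // phiF.
Qed.

Definition sym_unit (s : tensor A A) := sym s - vee (multmap s) 1.

Lemma sym_unit_linear : linear sym_unit.
Proof.
have [v1 _] := bilinear_vee A.
exact: (linear_sub (@sym_linear K A) (linear_comp (v1 1) multmap_linear)).
Qed.

Lemma p1_wedge_shuffle u : p1 (wedge_shuffle u) = tmap (@alt K A) (@sym K k) u.
Proof.
rewrite p1E; apply: qlift_wedge_shuffle quadrilinear_p1 _ _ _ u.
- by move=> a x b y; rewrite wedgeC veeC (linN (tens_linearl _)).
- exact: tmap_linear (@alt_linear K A) (@sym_linear K k).
by move=> a b x y; rewrite (tmap_tens (@alt_linear K A) (@sym_linear K k)) alt_tens sym_tens.
Qed.

Lemma p2_wedge_shuffle u : p2 (wedge_shuffle u) = tmap (@multmap K A) (@alt K k) u.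
Proof.
rewrite p2E; apply: qlift_wedge_shuffle quadrilinear_p2 _ _ _ u.
- by move=> a x b y; rewrite wedgeC mulrC (linN (tens_linearr _)).
- exact: tmap_linear multmap_linear (@alt_linear K k).
by move=> a b x y; rewrite (tmap_tens multmap_linear (@alt_linear K k)) multmap_tens alt_tens.
Qed.

Lemma p3_wedge_shuffle u : p3 (wedge_shuffle u) = tmap sym_unit (@alt K k) u.
Proof.
rewrite p3E; apply: qlift_wedge_shuffle quadrilinear_p3 _ _ _ u.
- by move=> a x b y; rewrite wedgeC veeC mulrC (linN (tens_linearr _)).
- exact: tmap_linear sym_unit_linear (@alt_linear K k).
move=> a b x y; rewrite (tmap_tens sym_unit_linear (@alt_linear K k)) alt_tens.
by rewrite /sym_unit sym_tens multmap_tens.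
Qed.

Lemma bracket_wedge_shuffle u :
  brmap (brg brk) (wedge_shuffle u) = tmap (@multmap K A) (brmap brk) u.
Proof.
rewrite bracketE; apply: qlift_wedge_shuffle quadrilinear_bracket _ _ _ u.
- by move=> a x b y; rewrite bracketC mulrC (linN (tens_linearr _)).
- exact: tmap_linear multmap_linear brmap_linear.
by move=> a b x y; rewrite (tmap_tens multmap_linear brmap_linear) multmap_tens brmap_tens.
Qed.

Lemma IA_sym_unit (a b : A) : IA (vee a b - vee (a * b) 1).
Proof.
split; first by apply: subspaceB; [apply: subspace_span | apply: Sym2_vee | apply: Sym2_vee].
by rewrite (linB multmap_linear) !multmap_vee mulr1 subrr.
Qed.

Lemma p1_tsub w : tsub (@Lam2 K A) (@Sym2 K k) (p1 w).
Proof.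
rewrite p1E; apply: qlift_in quadrilinear_p1 _ (subspace_span _) _ w => a x b y.
apply: span_mem; exists (wedge a b), (vee x y).
by split; [apply: Lam2_wedge | split; [apply: Sym2_vee |]].
Qed.

Lemma p2_tsub w : tsub (fun _ : A => True) (@Lam2 K k) (p2 w).
Proof.
rewrite p2E; apply: qlift_in quadrilinear_p2 _ (subspace_span _) _ w => a x b y.
by apply: span_mem; exists (a * b), (wedge x y); split=> //; split; [apply: Lam2_wedge |].
Qed.

Lemma p3_tsub w : tsub (@IA K A) (@Lam2 K k) (p3 w).
Proof.
rewrite p3E; apply: qlift_in quadrilinear_p3 _ (subspace_span _) _ w => a x b y.
apply: span_mem; exists (vee a b - vee (a * b) 1), (wedge x y).
by split; [apply: IA_sym_unit | split; [apply: Lam2_wedge |]].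
Qed.

Lemma tmap_brmap_p2 w : tmap id (brmap brk) (p2 w) = brmap (brg brk) w.
Proof.
rewrite p2E bracketE; move: w; apply: eq_tensor_tensor.
- exact: linear_comp (tmap_linear (@linear_id _ _) brmap_linear)
                      (qlift_linear quadrilinear_p2).
- exact: qlift_linear quadrilinear_bracket.
move=> a x b y; rewrite (qlift_tens quadrilinear_p2) (qlift_tens quadrilinear_bracket).
by rewrite (tmap_tens (@linear_id _ _) brmap_linear) brmap_wedge.
Qed.

Lemma p2_Z2 w : brmap (brg brk) w = 0 -> tsub (fun _ : A => True) (Z2 brk) (p2 w).
Proof.
move=> w0; have Z2ker := tsub_ker brmap_linear (subspace_span _) (p2_tsub w).
by apply: Z2ker; rewrite tmap_brmap_p2.
Qed.

Definition Z2_preimage w u1 u2 u3 :=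
  Z2 (brg brk) w /\ p1 w = u1 /\ p2 w = u2 /\ p3 w = u3.

Lemma Z2_preimageD w w' u1 u2 u3 u1' u2' u3' :
  Z2_preimage w u1 u2 u3 -> Z2_preimage w' u1' u2' u3' ->
  Z2_preimage (w + w') (u1 + u1') (u2 + u2') (u3 + u3').
Proof.
move=> [[Lw Bw] [<- [<- <-]]] [[Lw' Bw'] [<- [<- <-]]].
split; [split | split; [| split]].
- exact: subspaceD (subspace_span _) Lw Lw'.
- by rewrite bracketE (linD (qlift_linear quadrilinear_bracket)) -!bracketE Bw Bw' addr0.
- by rewrite !p1E (linD (qlift_linear quadrilinear_p1)).
- by rewrite !p2E (linD (qlift_linear quadrilinear_p2)).
- by rewrite !p3E (linD (qlift_linear quadrilinear_p3)).
Qed.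

Lemma Z2_preimage_Lam2_Sym2 u :
  tsub (@Lam2 K A) (@Sym2 K k) u -> Z2_preimage (wedge_shuffle u) u 0 0.
Proof.
move=> uT; split; [split | split; [| split]].
- exact: Lam2_wedge_shuffle.
- rewrite bracket_wedge_shuffle; apply: (tmap_tsub0 multmap_linear brmap_linear _ uT).
  by move=> s t Ls _; rewrite multmap_Lam2 // tens0l.
- rewrite p1_wedge_shuffle; apply: (tmap_tsub_id (@alt_linear K A) (@sym_linear K k) _ uT).
  by move=> s t Ls St; rewrite alt_Lam2 // sym_Sym2.
- rewrite p2_wedge_shuffle; apply: (tmap_tsub0 multmap_linear (@alt_linear K k) _ uT).
  by move=> s t Ls _; rewrite multmap_Lam2 // tens0l.
- rewrite p3_wedge_shuffle; apply: (tmap_tsub0 sym_unit_linear (@alt_linear K k) _ uT).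
  move=> s t Ls _; rewrite /sym_unit sym_Lam2 // multmap_Lam2 //.
  by rewrite (lin0 ((bilinear_vee _).1 _)) subrr tens0l.
Qed.

Lemma Z2_preimage_Z2 u : tsub (fun _ : A => True) (Z2 brk) u ->
  Z2_preimage (wedge_shuffle (tmap (fun a => vee a 1) id u)) 0 u 0.
Proof.
move=> uT; have v1L : linear (fun a : A => vee a 1) := (bilinear_vee A).1 1.
have idL := @linear_id K (tensor k k).
split; [split | split; [| split]].
- exact: Lam2_wedge_shuffle.
- rewrite bracket_wedge_shuffle (tmap_comp v1L idL multmap_linear brmap_linear).
  apply: (tmap_tsub0 (linear_comp multmap_linear v1L) (linear_comp brmap_linear idL) _ uT).
  by move=> a z _ [_ ->]; rewrite tens0r.
- rewrite p1_wedge_shuffle (tmap_comp v1L idL (@alt_linear K A) (@sym_linear K k)).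
  apply: (tmap_tsub0 (linear_comp (@alt_linear K A) v1L)
                     (linear_comp (@sym_linear K k) idL) _ uT).
  by move=> a z _ _; rewrite (alt_Sym2 (Sym2_vee a 1)) tens0l.
- rewrite p2_wedge_shuffle (tmap_comp v1L idL multmap_linear (@alt_linear K k)).
  apply: (tmap_tsub_id (linear_comp multmap_linear v1L)
                       (linear_comp (@alt_linear K k) idL) _ uT).
  by move=> a z _ [Lz _]; rewrite multmap_vee mulr1 alt_Lam2.
- rewrite p3_wedge_shuffle (tmap_comp v1L idL sym_unit_linear (@alt_linear K k)).
  apply: (tmap_tsub0 (linear_comp sym_unit_linear v1L)
                     (linear_comp (@alt_linear K k) idL) _ uT).
  move=> a z _ _; rewrite /sym_unit (sym_Sym2 two_unit (Sym2_vee a 1)).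
  by rewrite multmap_vee mulr1 subrr tens0l.
Qed.

Lemma Z2_preimage_IA_Lam2 u :
  tsub (@IA K A) (@Lam2 K k) u -> Z2_preimage (wedge_shuffle u) 0 0 u.
Proof.
move=> uT; split; [split | split; [| split]].
- exact: Lam2_wedge_shuffle.
- rewrite bracket_wedge_shuffle; apply: (tmap_tsub0 multmap_linear brmap_linear _ uT).
  by move=> i t [_ ->] _; rewrite tens0l.
- rewrite p1_wedge_shuffle; apply: (tmap_tsub0 (@alt_linear K A) (@sym_linear K k) _ uT).
  by move=> i t [Si _] _; rewrite alt_Sym2 // tens0l.
- rewrite p2_wedge_shuffle; apply: (tmap_tsub0 multmap_linear (@alt_linear K k) _ uT).
  by move=> i t [_ ->] _; rewrite tens0l.
- rewrite p3_wedge_shuffle; apply: (tmap_tsub_id sym_unit_linear (@alt_linear K k) _ uT).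
  move=> i t [Si Mi] Lt; rewrite /sym_unit sym_Sym2 // Mi alt_Lam2 //.
  by rewrite (lin0 ((bilinear_vee _).1 _)) subr0.
Qed.

End CurrentAlgebra.

Theorem lemma2p1 (K : fieldType) (two_unit : (2 : K) != 0)
  (A : comAlgType K) (k : lmodType K) (brk : k -> k -> k)
  (lie_k : is_lie brk)
  (u1 : tensor (tensor A A) (tensor k k)) (u2 : tensor A (tensor k k))
  (u3 : tensor (tensor A A) (tensor k k)) :
  (exists w : tensor (gl A k) (gl A k),
      Z2 (brg brk) w /\ p1 w = u1 /\ p2 w = u2 /\ p3 w = u3)
  <->
  [/\ tsub (@Lam2 K A) (@Sym2 K k) u1,
      tsub (fun _ : A => True) (Z2 brk) u2 &
      tsub (@IA K A) (@Lam2 K k) u3].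
Proof.
split=> [[w [[_ w0] [<- [<- <-]]]] | [u1T u2T u3T]].
  split; [exact: p1_tsub | exact: p2_Z2 | exact: p3_tsub].
have := Z2_preimageD lie_k (Z2_preimageD lie_k (Z2_preimage_Lam2_Sym2 two_unit lie_k u1T)
  (Z2_preimage_Z2 two_unit lie_k u2T)) (Z2_preimage_IA_Lam2 two_unit lie_k u3T).
by rewrite !addr0 !add0r => preim; eexists; exact: preim.
Qed.
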